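(* Let $n\geq1$ and let $H$ be an irreducible subgroup of $SL(n,\mathbb{C})$. Then $|Z_n(H)|$ divides $n^2$. Moreover, $Z_n(H)$ is an irreducible subgroup of $PSL(n,\mathbb{C})$ if and only if $|Z_n(H)|=n^2$.
   Context: Let $\xi=e^{2\pi i/n}$; the center of $SL(n,\mathbb{C})$ is $\langle \xi I_n\rangle$, and $\pi_n:SL(n,\mathbb{C})\to PSL(n,\mathbb{C})$ is the quotient map. A subgroup $H\le SL(n,\mathbb{C})$ is irreducible if no nonzero proper subspace of $\mathbb{C}^n$ is $H$-invariant; a subgroup of $PSL(n,\mathbb{C})$ is irreducible if its preimage under $\pi_n$ is. $Z_n(H)$ denotes the centralizer of $\pi_n(H)$ in $PSL(n,\mathbb{C})$. *)

(* The complex field C is modelled by an arbitrary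
   numClosedFieldType (algebraically closed, characteristic 0). *)
From HB Require Import structures.
From mathcomp Require Import all_boot all_order all_algebra.
Set Implicit Arguments. Unset Strict Implicit. Unset Printing Implicit Defensive.
Import Order.TTheory GRing.Theory Num.Theory.
Local Open Scope ring_scope.

Definition subgroupSL (C : numClosedFieldType) (n : nat) (H : 'M[C]_n -> Prop) :=
  [/\ H 1%:M,
      (forall g h, H g -> H h -> H (g *m h)),
      (forall g, H g -> g \in unitmx /\ H (invmx g)) &
      (forall g, H g -> \det g = 1)].

(* pi_n g = pi_n g' : g' = z g with z I_n central, i.e. z^n = 1. *)
Definition projeq (C : numClosedFieldType) (n : nat) (g g' : 'M[C]_n) : Prop :=
  exists z : C, z ^+ n = 1 /\ g' = z *: g.

(* Preimage in SL(n,C) of Z_n(H), the centralizer of pi_n(H) in PSL(n,C):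
   g in SL(n,C) with g h g^-1 h^-1 central for every h in H. *)
Definition ZnPre (C : numClosedFieldType) (n : nat) (H : 'M[C]_n -> Prop)
  (g : 'M[C]_n) : Prop :=
  \det g = 1 /\
  forall h, H h -> exists z : C, z ^+ n = 1 /\ g *m h = z *: (h *m g).

(* Irreducibility of a set S of matrices acting on column vectors C^n:
   every S-invariant subspace (spanned by the rows of U, viewed as column
   vectors; the image of u under g has row u *m g^T) is 0 or C^n. *)
Definition irreducibleS (C : numClosedFieldType) (n : nat) (S : 'M[C]_n -> Prop) :=
  forall U : 'M[C]_n, (forall g, S g -> (U *m g^T <= U)%MS) ->
    \rank U = 0%N \/ \rank U = n.

(* The set of pi_n-classes of elements satisfying P has exactly k elements:
   there is a list of k pairwise non-equivalent representatives in P
   covering every element of P. *)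
Definition num_classes (C : numClosedFieldType) (n : nat) (P : 'M[C]_n -> Prop)
  (k : nat) : Prop :=
  exists s : seq 'M[C]_n,
    [/\ size s = k,
        (forall g, g \in s -> P g),
        (forall i j, (i < k)%N -> (j < k)%N ->
           projeq (nth 0 s i) (nth 0 s j) -> i = j) &
        (forall g, P g -> exists2 g', g' \in s & projeq g' g)].

From HB Require Import structures.
From mathcomp Require Import all_boot all_order all_algebra.
From mathcomp Require Import zify.
From Stdlib Require Import Classical.
Set Implicit Arguments. Unset Strict Implicit. Unset Printing Implicit Defensive.
Import Order.TTheory GRing.Theory Num.Theory.
Local Open Scope ring_scope.

(* Let Z be the preimage of Z_n(H). For g in Z, h in H write g h = c_g(h) h g.
   By Schur's lemma, two elements of Z with the same scalars c_g are equal
   modulo the centre; taking traces in g^-1 g' h = (c_g'(h)/c_g(h)) h g^-1 g'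
   shows that otherwise tr(g^-1 g') = 0. Hence a transversal g_1, ..., g_k of
   Z modulo the centre is linearly independent in M_n(C), and the average
   P = k^-1 sum_i Ad(g_i) of the conjugation operators on M_n(C) is an
   idempotent of trace n^2 / k, i.e. n^2 = k rank P. The image of P consists
   of matrices commuting with Z, which are scalars when Z is irreducible,
   whence k = n^2. Conversely, if k = n^2 the g_i span M_n(C), so every
   Z-invariant subspace is invariant under all matrices. *)

Lemma expr_eq1_neq0 (R : nzRingType) n (z : R) : (0 < n)%N -> z ^+ n = 1 -> z != 0.
Proof.
move=> n_gt0 zn; apply: contra_eqN zn => /eqP ->.
by rewrite expr0n eqn0Ngt n_gt0 eq_sym oner_eq0.
Qed.

Lemma invmxM (R : comUnitRingType) n (A B : 'M[R]_n) :
  A \in unitmx -> B \in unitmx -> invmx (A *m B) = invmx B *m invmx A.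
Proof.
move=> uA uB; have uAB : A *m B \in unitmx by rewrite unitmx_mul uA uB.
have e : A *m B *m (invmx B *m invmx A) = 1%:M by rewrite mulmxA mulmxK ?mulmxV.
by rewrite -[RHS](mulKmx uAB) e mulmx1.
Qed.

Lemma skew_commuteV (R : comUnitRingType) n (g h : 'M[R]_n) z :
  g \in unitmx -> g *m h = z *: (h *m g) -> h *m invmx g = z *: (invmx g *m h).
Proof.
move=> ug e.
by rewrite -[h in LHS](mulKmx ug) e -scalemxAr -scalemxAl mulmxA mulmxK.
Qed.

Lemma mxtrace_idem (F : fieldType) n (P : 'M[F]_n) :
  P *m P = P -> \tr P = (\rank P)%:R.
Proof.
move=> PP; have := mulmx_base P; have := col_base_full P; have := row_base_free P.
move: (col_base P) (row_base P) => Cb Rb Rfree Cfull PE.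
have RCR : Rb *m Cb *m Rb = Rb.
  by apply: (row_full_inj Cfull); rewrite !mulmxA PE -mulmxA PE.
have RC1 : Rb *m Cb = 1%:M by apply: (row_free_inj Rfree); rewrite RCR mul1mx.
by rewrite -{1}PE mxtrace_mulC RC1 mxtrace1.
Qed.

Lemma mxtrace_lin_mx (R : comNzRingType) n (f : {linear 'M[R]_n -> 'M[R]_n}) :
  \tr (lin_mx f) = \sum_i \sum_j f (delta_mx i j) i j.
Proof.
rewrite /mxtrace (reindex _ (curry_mxvec_bij _ _)) /= pair_bigA /=.
apply: eq_bigr => [[i j]] _ /=.
by rewrite mxE /= -mxvec_delta mxvecK mxvecE.
Qed.

Lemma mulmx_mxvec_inj (R : pzRingType) n p (A B : 'M[R]_(n * n, p)) :
  (forall X : 'M[R]_n, mxvec X *m A = mxvec X *m B) -> A = B.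
Proof. by move=> e; apply/row_matrixP => a; rewrite !rowE -[delta_mx 0 a]vec_mxK. Qed.

Lemma row_full_stable (F : fieldType) n (U : 'M[F]_n) :
  U != 0 -> (forall X : 'M[F]_n, (U *m X <= U)%MS) -> row_full U.
Proof.
case/matrix0Pn => i [j Uij] stableU; rewrite -sub1mx; apply/row_subP => l.
have e : row i (U *m delta_mx j l) = U i j *: row l 1%:M.
  apply/rowP => m; rewrite !mxE (bigD1 j) //= big1 => [|t tj]; last first.
    by rewrite !mxE (negPf tj) mulr0.
  by rewrite mxE eqxx addr0 /= eq_sym.
have : (U i j *: row l 1%:M <= U)%MS by rewrite -e (submx_trans (row_sub i _)).
by move/(scalemx_sub (U i j)^-1); rewrite scalerA mulVf // scale1r.
Qed.

(* The matrix of X |-> g X g^-1 acting on row vectors mxvec X on the right,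
   so that Ad reverses products (Ad_mul). *)
Definition Ad (R : comUnitRingType) n (g : 'M[R]_n) : 'M[R]_(n * n) :=
  lin_mx (mulmxr (invmx g) \o mulmx g).

Section Conjugation.
Variables (R : comUnitRingType) (n : nat).
Implicit Types g X : 'M[R]_n.

Lemma mxvec_Ad g X : mxvec X *m Ad g = mxvec (g *m X *m invmx g).
Proof. by rewrite /Ad mul_vec_lin. Qed.

Lemma Ad_mul g g' : g \in unitmx -> g' \in unitmx -> Ad g *m Ad g' = Ad (g' *m g).
Proof.
move=> ug ug'; apply: mulmx_mxvec_inj => X.
by rewrite mulmxA !mxvec_Ad invmxM // !mulmxA.
Qed.

Lemma AdZ g z : g \in unitmx -> z \is a GRing.unit -> Ad (z *: g) = Ad g.
Proof.
move=> ug uz; apply: mulmx_mxvec_inj => X.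
have uzg : z *: g \in unitmx by rewrite unitmxE detZ unitrM -unitmxE ug unitrX.
by rewrite !mxvec_Ad invmxZ // -!scalemxAl -scalemxAr scalerA mulrV // scale1r.
Qed.

Lemma mxtrace_Ad g : \tr (Ad g) = \tr g * \tr (invmx g).
Proof.
rewrite /Ad mxtrace_lin_mx /mxtrace big_distrl /=; apply: eq_bigr => i _.
rewrite big_distrr /=; apply: eq_bigr => j _.
rewrite -(mul_delta_mx (0 : 'I_1)) !mulmxA -[_ *m invmx g]mulmxA -colE -rowE.
by rewrite mxE big_ord1 !mxE.
Qed.

End Conjugation.

Lemma irreducibleS_commute_scalar (C : numClosedFieldType) n
    (S : 'M[C]_n -> Prop) (X : 'M[C]_n) :
  (0 < n)%N -> irreducibleS S -> (forall g, S g -> X *m g = g *m X) ->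
  exists a, X = a%:M.
Proof.
move=> n_gt0 irrS comX.
have : size (char_poly X^T) != 1%N by rewrite size_char_poly; case: n n_gt0 {S irrS comX X}.
case/closed_rootP => a; rewrite -eigenvalue_root_char => ev; exists a.
have trB : X^T - a%:M = (X - a%:M)^T by rewrite linearB /= tr_scalar_mx.
have comB g : S g -> (X - a%:M) *m g = g *m (X - a%:M).
  by move=> Sg; rewrite mulmxBl mulmxBr comX // scalar_mxC.
have stable g : S g -> (eigenspace X^T a *m g^T <= eigenspace X^T a)%MS.
  move=> Sg; apply/sub_kermxP.
  rewrite trB -mulmxA -trmx_mul comB // trmx_mul mulmxA.
  by have /sub_kermxP := submx_refl (eigenspace X^T a); rewrite trB => ->; rewrite mul0mx.
case: (irrS _ stable) => rk.
  by move: ev; rewrite /eigenvalue -mxrank_eq0 rk.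
have : \rank (X - a%:M)^T = 0%N.
  move: rk; rewrite /eigenspace trB mxrank_ker.
  by have := rank_leq_row ((X - a%:M)^T); lia.
by rewrite mxrank_tr => /eqP; rewrite mxrank_eq0 subr_eq0 => /eqP.
Qed.

Section ProjectiveEquivalence.
Variables (C : numClosedFieldType) (n : nat).
Hypothesis n_gt0 : (0 < n)%N.
Implicit Types g : 'M[C]_n.

Lemma projeq_refl g : projeq g g.
Proof. by exists 1; rewrite expr1n scale1r. Qed.

Lemma projeq_sym g g' : projeq g g' -> projeq g' g.
Proof.
case=> z [zn ->]; exists z^-1; split; first by rewrite exprVn zn invr1.
by rewrite scalerA mulVf ?scale1r // (expr_eq1_neq0 n_gt0).
Qed.

Lemma projeq_trans g g' g'' : projeq g g' -> projeq g' g'' -> projeq g g''.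
Proof.
case=> z [zn ->] [w [wn ->]]; exists (w * z).
by rewrite exprMn zn wn mulr1 scalerA.
Qed.

Lemma projeq_mul2l g a b : g \in unitmx -> projeq (g *m a) (g *m b) -> projeq a b.
Proof. by move=> ug [z [zn e]]; exists z; rewrite -(mulKmx ug b) e -scalemxAr mulKmx. Qed.

End ProjectiveEquivalence.

Section Centralizer.
Variables (C : numClosedFieldType) (n : nat) (H : 'M[C]_n -> Prop).
Hypotheses (n_gt0 : (0 < n)%N) (sgH : subgroupSL H) (irrH : irreducibleS H).
Implicit Types g h : 'M[C]_n.

Lemma ZnPre_unit g : ZnPre H g -> g \in unitmx.
Proof. by case=> detg _; rewrite unitmxE detg unitr1. Qed.

Lemma ZnPre1 : ZnPre H 1%:M.
Proof. by split=> [|h _]; [exact: det1 | exists 1; rewrite expr1n mul1mx mulmx1 scale1r]. Qed.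

Lemma ZnPreM g g' : ZnPre H g -> ZnPre H g' -> ZnPre H (g *m g').
Proof.
case=> detg cg [detg' cg']; split=> [|h Hh]; first by rewrite det_mulmx detg detg' mulr1.
have [z [zn e]] := cg h Hh; have [z' [zn' e']] := cg' h Hh.
exists (z * z'); rewrite exprMn zn zn' mulr1; split=> //.
by rewrite -mulmxA e' -scalemxAr [g *m (h *m g')]mulmxA e -scalemxAl scalerA mulrC !mulmxA.
Qed.

Lemma ZnPre_projeq g g' : ZnPre H g -> ZnPre H g' ->
  (forall h, H h -> exists z, g *m h = z *: (h *m g) /\ g' *m h = z *: (h *m g')) ->
  projeq g g'.
Proof.
move=> Zg [detg' _] same_scalars; have ug := ZnPre_unit Zg.
have [a ea] : exists a, invmx g *m g' = a%:M.
  apply: (irreducibleS_commute_scalar n_gt0 irrH) => h Hh.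
  have [z [e e']] := same_scalars h Hh.
  by rewrite -mulmxA e' -scalemxAr !mulmxA (skew_commuteV ug e) -scalemxAl.
have eg' : g' = a *: g by rewrite -(mulKVmx ug g') ea mul_mx_scalar.
by exists a; move: detg'; rewrite eg' detZ (proj1 Zg) mulr1.
Qed.

Lemma mxtrace_ZnPre_inequiv g g' : ZnPre H g -> ZnPre H g' -> ~ projeq g g' ->
  \tr (invmx g *m g') = 0.
Proof.
move=> Zg Zg' not_eq; apply: contra_not_eq not_eq => trY_neq0.
apply: ZnPre_projeq => // h Hh.
have ug := ZnPre_unit Zg.
have uh : h \in unitmx by have [_ _ /(_ h Hh) []] := sgH.
have [_ /(_ h Hh) [z [_ e]]] := Zg; have [_ /(_ h Hh) [z' [_ e']]] := Zg'.
exists z; split => //; suff -> : z = z' by [].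
set Y := invmx g *m g' in trY_neq0.
have eY : z *: (Y *m h) = z' *: (h *m Y).
  rewrite /Y -mulmxA e' -scalemxAr [h *m (_ *m _)]mulmxA (skew_commuteV ug e).
  by rewrite -scalemxAl !scalerA mulrC mulmxA.
have : z * \tr Y = z' * \tr Y.
  have := congr1 (fun M => \tr (invmx h *m M)) eY => /=.
  by rewrite -!scalemxAr !mxtraceZ mulmxA mulKmx // mxtrace_mulC mulmxA mulmxV // mul1mx.
by move/(mulIf trY_neq0).
Qed.

Definition ZnPre_inequiv (s : seq 'M[C]_n) :=
  (forall g, g \in s -> ZnPre H g) /\
  (forall i j, (i < size s)%N -> (j < size s)%N -> projeq s`_i s`_j -> i = j).

Definition vec_rows (s : seq 'M[C]_n) : 'M[C]_(size s, n * n) :=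
  \matrix_(i < size s) mxvec s`_i.

Lemma mul_vec_rows s (v : 'rV_(size s)) :
  v *m vec_rows s = mxvec (\sum_(i < size s) v 0 i *: s`_i).
Proof.
rewrite mulmx_sum_row linear_sum; apply: eq_bigr => i _.
by rewrite linearZ /= rowK.
Qed.

(* Taking tr(g_j^-1 _) of a vanishing combination isolates its j-th coefficient. *)
Lemma ZnPre_inequiv_free s : ZnPre_inequiv s -> row_free (vec_rows s).
Proof.
case=> sZ sinj; apply: inj_row_free => v; rewrite mul_vec_rows => e0.
have comb0 : \sum_(i < size s) v 0 i *: s`_i = 0.
  by apply: (can_inj mxvecK); rewrite e0 linear0.
apply/rowP => j; rewrite mxE.
have Zs (i : 'I_(size s)) : ZnPre H s`_i by apply: sZ; rewrite mem_nth.
have := congr1 (fun M => \tr (invmx s`_j *m M)) comb0 => /=.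
rewrite mulmx0 mxtrace0 mulmx_sumr raddf_sum (bigD1 j) //= big1 => [|i ij].
  rewrite addr0 -scalemxAr mxtraceZ mulVmx ?ZnPre_unit // mxtrace1 => /eqP.
  by rewrite mulf_eq0 pnatr_eq0 eqn0Ngt n_gt0 orbF => /eqP.
rewrite -scalemxAr mxtraceZ mxtrace_ZnPre_inequiv ?mulr0 // => pe.
by move: ij; rewrite -(inj_eq val_inj) /= (sinj _ _ (ltn_ord j) (ltn_ord i) pe) eqxx.
Qed.

Lemma size_ZnPre_inequiv s : ZnPre_inequiv s -> (size s <= n * n)%N.
Proof. by move=> ineq; rewrite -(eqP (ZnPre_inequiv_free ineq)) rank_leq_col. Qed.

Lemma ZnPre_inequiv_rcons s g : ZnPre_inequiv s -> ZnPre H g ->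
  ~ (exists2 g', g' \in s & projeq g' g) -> ZnPre_inequiv (rcons s g).
Proof.
case=> sZ sinj Zg g_new; split=> [x|i j].
  by rewrite mem_rcons in_cons => /orP [/eqP -> // | /sZ].
rewrite size_rcons !ltnS !nth_rcons => hi hj.
case: (ltnP i (size s)) => ci; case: (ltnP j (size s)) => cj.
- exact: sinj.
- have -> : j = size s by lia.
  by rewrite eqxx => pe; case: g_new; exists s`_i; rewrite ?mem_nth.
- have -> : i = size s by lia.
  by rewrite eqxx => /(projeq_sym n_gt0) pe; case: g_new; exists s`_j; rewrite ?mem_nth.
- lia.
Qed.

Definition ZnPre_cover (s : seq 'M[C]_n) :=
  forall g, ZnPre H g -> exists2 g', g' \in s & projeq g' g.

Lemma ZnPre_inequiv_extend s : ZnPre_inequiv s -> ~ ZnPre_cover s ->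
  exists g, ZnPre_inequiv (rcons s g).
Proof.
move=> ineq /not_all_ex_not [g /(imply_to_and (ZnPre H g)) [Zg g_new]].
by exists g; apply: ZnPre_inequiv_rcons.
Qed.

(* Extending an inequivalent list must stop, as its length is bounded by n * n. *)
Lemma exists_ZnPre_transversal : exists s, ZnPre_inequiv s /\ ZnPre_cover s.
Proof.
suff grow d s : ZnPre_inequiv s -> (n * n - size s <= d)%N ->
    exists s', ZnPre_inequiv s' /\ ZnPre_cover s'.
  by apply: (grow (n * n)%N [::]); [split=> // i j | rewrite subn0].
elim: d s => [|d IHd] s ineq hd.
all: have [cover|/(ZnPre_inequiv_extend ineq) [g ineq']] := classic (ZnPre_cover s).
all: try by exists s.
all: have := size_ZnPre_inequiv ineq'; rewrite size_rcons => hs.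
  by exfalso; lia.
by apply: (IHd _ ineq'); rewrite size_rcons; lia.
Qed.

Lemma ZnPre_inequiv_irreducible s :
  ZnPre_inequiv s -> size s = (n ^ 2)%N -> irreducibleS (ZnPre H).
Proof.
move=> s_ineq s_sq U stableU.
have full : row_full (vec_rows s).
  by rewrite /row_full (eqP (ZnPre_inequiv_free s_ineq)) s_sq mulnn.
have [->|U_neq0] := eqVneq U 0; first by left; rewrite mxrank0.
right; apply/eqP/row_full_stable => // X.
have /submxP [a ea] := submx_full (mxvec X^T) full.
rewrite mul_vec_rows in ea.
have -> : X = (\sum_(i < size s) a 0 i *: s`_i)^T by rewrite -(can_inj mxvecK ea) trmxK.
rewrite linear_sum mulmx_sumr; apply: summx_sub => i _.
by rewrite linearZ -scalemxAr scalemx_sub // stableU //; apply: s_ineq.1; rewrite mem_nth.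
Qed.

Section Transversal.
Variable s : seq 'M[C]_n.
Hypotheses (s_ineq : ZnPre_inequiv s) (s_cover : ZnPre_cover s).
Local Notation k := (size s).

Let sZ (i : 'I_k) : ZnPre H s`_i.
Proof. by apply: s_ineq.1; rewrite mem_nth. Qed.

Let transversal_inj (i j : 'I_k) : projeq s`_i s`_j -> i = j.
Proof. by move=> pe; apply: val_inj; exact: s_ineq.2 _ _ (ltn_ord i) (ltn_ord j) pe. Qed.

Lemma transversal_index g : ZnPre H g -> exists i : 'I_k, projeq s`_i g.
Proof.
move=> Zg; have [g' g's pe] := s_cover Zg.
by exists (Ordinal (etrans (index_mem g' s) g's)); rewrite /= nth_index.
Qed.

Definition Ad_sum := \sum_(i < k) Ad s`_i.
Definition Ad_avg := (k%:R : C)^-1 *: Ad_sum.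

(* Left multiplication by g permutes the transversal modulo the centre. *)
Lemma Ad_sum_mulr g : ZnPre H g -> Ad_sum *m Ad g = Ad_sum.
Proof.
move=> Zg.
have [f fP] : exists f : 'I_k -> 'I_k, forall i, projeq s`_(f i) (g *m s`_i).
  exact: fin_all_exists (fun i => transversal_index (ZnPreM Zg (sZ i))).
have finj : injective f.
  move=> i i' e; apply: transversal_inj; apply: (projeq_mul2l (ZnPre_unit Zg)).
  by apply: projeq_trans (projeq_sym n_gt0 (fP i)) _; rewrite e.
rewrite /Ad_sum mulmx_suml [RHS](reindex_inj finj); apply: eq_bigr => i _.
rewrite Ad_mul ?ZnPre_unit //; have [z [zn ->]] := fP i.
by rewrite AdZ ?ZnPre_unit ?unitfE ?(expr_eq1_neq0 n_gt0).
Qed.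

Let k_neq0 : (k%:R : C) != 0.
Proof.
have [[i /= i_lt_k] _] := transversal_index ZnPre1.
by rewrite pnatr_eq0 -lt0n (leq_ltn_trans _ i_lt_k).
Qed.

Lemma Ad_avg_mulr g : ZnPre H g -> Ad_avg *m Ad g = Ad_avg.
Proof. by move=> Zg; rewrite -scalemxAl Ad_sum_mulr. Qed.

Lemma Ad_avg_idem : Ad_avg *m Ad_avg = Ad_avg.
Proof.
have AdSum : Ad_avg *m Ad_sum = Ad_avg *+ k.
  by rewrite mulmx_sumr (eq_bigr _ (fun i _ => Ad_avg_mulr (sZ i))) sumr_const card_ord.
by rewrite {2}/Ad_avg -scalemxAr AdSum -scaler_nat scalerA mulVf // scale1r.
Qed.

(* Only the term equivalent to 1 survives, by orthogonality. *)
Lemma mxtrace_Ad_sum : \tr Ad_sum = (n * n)%:R.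
Proof.
have [i0 pe0] := transversal_index ZnPre1.
rewrite /Ad_sum raddf_sum (bigD1 i0) //= big1 ?addr0 => [|i ii0].
  have [w [wn ->]] := projeq_sym n_gt0 pe0.
  have uw : w \is a GRing.unit by rewrite unitfE (expr_eq1_neq0 n_gt0).
  by rewrite scalemx1 mxtrace_Ad invmx_scalar !mxtrace_scalar mulrnAl mulrnAr mulrV // -mulrnA.
rewrite mxtrace_Ad -[s`_i]mul1mx -invmx1 mxtrace_ZnPre_inequiv ?mul0r //.
  exact: ZnPre1.
by move=> pe; move: ii0; rewrite (transversal_inj (projeq_trans pe0 pe)) eqxx.
Qed.

Lemma mxrank_Ad_avg : (n * n = k * \rank Ad_avg)%N.
Proof.
apply/eqP; rewrite -(eqr_nat C) [(k * _)%:R]natrM -mxtrace_idem ?Ad_avg_idem //.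
by rewrite mxtraceZ mxtrace_Ad_sum mulrA mulfV // mul1r.
Qed.

Lemma size_transversal_dvdn : (k %| n ^ 2)%N.
Proof. by rewrite -mulnn mxrank_Ad_avg dvdn_mulr. Qed.

(* The rows of Ad_avg are fixed by every Ad g, i.e. commute with Z. *)
Lemma irreducible_size_transversal : irreducibleS (ZnPre H) -> k = (n ^ 2)%N.
Proof.
move=> irrZ.
have rank_le1 : (\rank Ad_avg <= 1)%N.
  suff sub : (Ad_avg <= mxvec (1%:M : 'M[C]_n))%MS.
    exact: leq_trans (mxrankS sub) (rank_leq_row _).
  apply/row_subP => a; rewrite rowE.
  have [y ey] : exists y, vec_mx (delta_mx 0 a *m Ad_avg) = y%:M.
    apply: (irreducibleS_commute_scalar n_gt0 irrZ) => g Zg.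
    set Y := vec_mx _.
    have : mxvec Y *m Ad g = mxvec Y by rewrite vec_mxK -mulmxA Ad_avg_mulr.
    rewrite mxvec_Ad => /(can_inj mxvecK) eY.
    by rewrite -{1}eY mulmxKV ?ZnPre_unit.
  by rewrite -[_ *m Ad_avg]vec_mxK ey -scalemx1 linearZ scalemx_sub.
rewrite -mulnn; move: rank_le1 mxrank_Ad_avg; case: (\rank _) => [|[|//]] _.
  by rewrite muln0 => /eqP; rewrite muln_eq0 orbb eqn0Ngt n_gt0.
by rewrite muln1.
Qed.

End Transversal.

End Centralizer.

Theorem mainTheorem4 (C : numClosedFieldType) (n : nat) (H : 'M[C]_n -> Prop) :
  (0 < n)%N -> subgroupSL H -> irreducibleS H ->
  exists k : nat,
    [/\ num_classes (ZnPre H) k,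
        (k %| n ^ 2)%N &
        (irreducibleS (ZnPre H) <-> k = (n ^ 2)%N)].
Proof.
move=> n_gt0 sgH irrH.
have [s [s_ineq s_cover]] := exists_ZnPre_transversal n_gt0 sgH irrH.
exists (size s); split.
- by exists s; split; case: s_ineq.
- exact: (size_transversal_dvdn n_gt0 sgH irrH s_ineq s_cover).
split.
- exact: (irreducible_size_transversal n_gt0 sgH irrH s_ineq s_cover).
- exact: ZnPre_inequiv_irreducible.
Qed.
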